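(* Let $(\Omega,\mathcal F,\mu)$ be a measure space and $\mathscr A\subset L^\infty(\Omega,\mathcal F,\mu)$. The following are equivalent: (i) $\mathscr A$ is uniformly approximable in $L^\infty$; (ii) $\sup_{f\in\mathscr A}\mathcal N(f,\varepsilon)<\infty$ for every $\varepsilon>0$. In this case $N_{\infty,\varepsilon}(\mathscr A)=\sup_{f\in\mathscr A}\mathcal N(f,\varepsilon)$ for every $\varepsilon>0$.
   Context: All measures are assumed not identically zero. $\mathscr G_{\infty,k}$ is the set of functions $\sum_{i=1}^l a_i\mathbf 1_{A_i}$ with $l\le k$, $\{A_i\}$ a measurable partition of $\Omega$, $a_i\in\mathbb R$. For $\mathscr A\subset L^\infty$, $N_{\infty,\varepsilon}(\mathscr A)=\inf\{k\ge1:\ \forall f\in\mathscr A\ \exists h\in\mathscr G_{\infty,k},\ \|f-h\|_\infty\le\varepsilon\}$ ($\inf\emptyset=\infty$); $\mathscr A$ is uniformly approximable if $N_{\infty,\varepsilon}(\mathscr A)<\infty$ for all $\varepsilon>0$. For $M\subset\mathbb R$, $\mathcal N(M,\varepsilon)$ is the least number of closed intervals of radius $\varepsilon$ covering $M$. For a measurable $f$, $\mathcal N(f,\varepsilon)=\inf\{\mathcal N(g(\Omega),\varepsilon):\ g \text{ measurable},\ g=f\ \mu\text{-a.e.}\}$. *)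

From HB Require Import structures.
From mathcomp Require Import all_boot all_order all_algebra.
From mathcomp Require Import all_classical all_reals all_analysis.
Set Implicit Arguments. Unset Strict Implicit. Unset Printing Implicit Defensive.
Import Order.TTheory GRing.Theory Num.Theory.
Import numFieldNormedType.Exports.
Local Open Scope classical_set_scope.
Local Open Scope ring_scope.

Section defs.
Context {d : measure_display} {T : measurableType d} {R : realType}.
Variable mu : {measure set T -> \bar R}.

(* L^infinity(mu): measurable functions with finite essential sup norm
   (we work with representatives; all notions below are a.e.-invariant). *)
Definition inLinf (f : T -> R) : Prop :=
  measurable_fun [set: T] f /\ (Lnorm mu +oo%E (EFin \o f) < +oo)%E.

Definition Linf_dist (f h : T -> R) : \bar R := Lnorm mu +oo%E (EFin \o (f \- h)).

Definition G_inf (k : nat) : set (T -> R) :=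
  [set h | exists (l : nat) (A : 'I_l -> set T) (a : 'I_l -> R),
      (l <= k)%N /\ (forall i, measurable (A i)) /\
      (forall i j, i != j -> A i `&` A j = set0) /\
      \bigcup_(i in [set: 'I_l]) A i = [set: T] /\
      h = (fun x => \sum_(i < l) a i * \1_(A i) x)].

(* N_{oo,eps}(calA), with inf of the empty set = +oo *)
Definition N_inf (calA : set (T -> R)) (eps : R) : \bar R :=
  ereal_inf [set (k%:R)%:E | k in
     [set k : nat | (1 <= k)%N /\ forall f, calA f ->
        exists2 h, G_inf k h & (Linf_dist f h <= eps%:E)%E]].

Definition uniformly_approximable (calA : set (T -> R)) : Prop :=
  forall eps : R, 0 < eps -> (N_inf calA eps < +oo)%E.

End defs.

Definition Ncov {R : realType} (M : set R) (eps : R) : \bar R :=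
  ereal_inf [set (n%:R)%:E | n in
     [set n : nat | exists c : 'I_n -> R,
        M `<=` \bigcup_(i in [set: 'I_n]) `[c i - eps, c i + eps]%classic]].

Definition Nfun {d : measure_display} {T : measurableType d} {R : realType}
    (mu : {measure set T -> \bar R}) (f : T -> R) (eps : R) : \bar R :=
  ereal_inf [set Ncov (range g) eps | g in
     [set g : T -> R | measurable_fun [set: T] g /\ {ae mu, forall x, g x = f x}]].

From HB Require Import structures.
From mathcomp Require Import all_boot all_order all_algebra.
From mathcomp Require Import all_classical all_reals all_analysis.
From mathcomp Require Import ess_sup_inf measurable_realfun.
Import Order.TTheory GRing.Theory Num.Theory.
Import numFieldNormedType.Exports.
Local Open Scope classical_set_scope.
Local Open Scope ring_scope.

(* If a step function h with l <= k values is within eps of f, clipping f - h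
   to [-eps, eps] gives an a.e. modification of f whose range lies in the l
   intervals of radius eps around the values of h, so N(f, eps) <= k.
   Conversely, if N(f, eps) < k + 1, the preimages of a disjointification of
   k covering intervals form a measurable partition on which the step function
   with the centres as values is eps-close to f.  Since every N(f, eps) is a
   positive integer, the least k that works for the whole family is their
   supremum. *)

Lemma sum_indic_partition {T : Type} {R : pzRingType} {l} {A : 'I_l -> set T}
    (a : 'I_l -> R) {i x} :
  (forall i j, i != j -> A i `&` A j = set0) -> A i x ->
  \sum_(j < l) a j * \1_(A j) x = a i.
Proof.
move=> disjA Aix; rewrite (bigD1 i) //= big1 => [|j ji].
  by rewrite indicE mem_set // mulr1 addr0.
rewrite indicE memNset ?mulr0 // => Ajx.
have : (A i `&` A j) x by [].
by rewrite disjA // eq_sym.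
Qed.

Lemma measure_setT_gt0 {d} {T : measurableType d} {R : realType}
    {mu : {measure set T -> \bar R}} :
  (exists A, measurable A /\ mu A <> 0%E) -> (0 < mu [set: T])%E.
Proof.
move=> [A [mA muA]]; apply: (@lt_le_trans _ _ (mu A)).
  by rewrite lt0e measure_ge0 andbT; apply/eqP.
by apply: le_measure; rewrite ?inE.
Qed.

Lemma measurable_partition_of_cover {d d'} {T : measurableType d}
    {U : measurableType d'} {g : T -> U} {m} {B : 'I_m -> set U} :
  measurable_fun [set: T] g -> (forall i, measurable (B i)) ->
  range g `<=` \bigcup_(i in [set: 'I_m]) B i ->
  exists A : 'I_m -> set T,
    [/\ forall i, measurable (A i), forall i j, i != j -> A i `&` A j = set0,
        \bigcup_(i in [set: 'I_m]) A i = [set: T] & forall i, A i `<=` g @^-1` B i].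
Proof.
move=> mg mB cover_g.
pose A i := g @^-1` (B i `\` \bigcup_(j in [set j : 'I_m | (j < i)%N]) B j).
exists A; split.
- move=> i; rewrite /A -[_ @^-1` _]setTI; apply: mg => //.
  by apply: measurableD => //; apply: fin_bigcup_measurable.
- move=> i j ij; apply/seteqP; split => // x [Aix Ajx].
  case: (ltngtP i j) => [lt_ij|lt_ji|/val_inj eq_ij]; last by rewrite eq_ij eqxx in ij.
  + by case: Ajx => _; apply; exists i => //; case: Aix.
  + by case: Aix => _; apply; exists j => //; case: Ajx.
- apply/seteqP; split => // x _.
  have [i0 _ Bi0] := cover_g (g x) (ex_intro2 _ _ x I erefl).
  have [i /asboolP Bi i_min] := @arg_minnP _ i0 (fun i => `[< B i (g x) >])
    (fun i => nat_of_ord i) (asboolT Bi0).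
  exists i => //; split => // -[j /= ji Bj].
  by have := i_min j (asboolT Bj); rewrite leqNgt ji.
- by move=> i x [].
Qed.

Section Nfun_step_approximation.
Context {d} {T : measurableType d} {R : realType} {mu : {measure set T -> \bar R}}.
Hypothesis mu_gt0 : (0 < mu [set: T])%E.

Lemma Linf_dist_leP (f h : T -> R) (e : R) :
  (Linf_dist mu f h <= e%:E)%E <-> {ae mu, forall x, `|f x - h x| <= e}.
Proof.
rewrite /Linf_dist unlock /= mu_gt0; split.
  by move/ess_supP; apply: filterS => x; rewrite lee_fin.
by move=> fh; apply/ess_supP; apply: filterS fh => x; rewrite lee_fin.
Qed.

Lemma Nfun_ge1 f e : (1%:E <= Nfun mu f e)%E.
Proof.
have [x0 _] : [set: T] !=set0.
  by apply/set0P/eqP => T0; move: mu_gt0; rewrite T0 measure0 ltxx.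
apply/ereal_infP => _ [g _ <-]; apply/ereal_infP => _ [n [c cover_g] <-].
have [i _ _] := cover_g (g x0) (ex_intro2 _ _ x0 I erefl).
by rewrite lee_fin ler1n (leq_ltn_trans _ (ltn_ord i)).
Qed.

Lemma Nfun_le_G_inf {f h k e} : 0 <= e -> measurable_fun [set: T] f ->
  G_inf k h -> (Linf_dist mu f h <= e%:E)%E -> (Nfun mu f e <= k%:R%:E)%E.
Proof.
move=> e0 mf [l [A [a [lk [mA [disjA [coverA hE]]]]]]] /Linf_dist_leP fh.
have mh : measurable_fun [set: T] h.
  rewrite hE; apply: measurable_sum => i; apply: measurable_funM; first exact: measurable_cst.
  exact: measurable_indic.
pose g x := h x + Num.max (- e) (Num.min e (f x - h x)).
have mg : measurable_fun [set: T] g.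
  apply: measurable_funD => //; apply: measurable_maxr; first exact: measurable_cst.
  by apply: measurable_minr; [exact: measurable_cst | exact: measurable_funB].
have g_ae_f : {ae mu, forall x, g x = f x}.
  apply: filterS fh => x; rewrite ler_norml => /andP[fh_ge fh_le].
  by rewrite /g min_r // max_r // addrC subrK.
have cover_g : range g `<=` \bigcup_(i in [set: 'I_l]) `[a i - e, a i + e]%classic.
  move=> _ [x _ <-]; have : [set: T] x by [].
  rewrite -coverA => -[i _ Aix]; exists i => //=.
  rewrite in_itv /= /g hE (sum_indic_partition a disjA Aix) !lerD2l.
  rewrite le_max lexx ge_max ge_min lexx andbT /=.
  by rewrite (@le_trans _ _ 0) ?oppr_le0.
apply: (@le_trans _ _ (Ncov (range g) e)); first by apply: ereal_inf_lbound; exists g.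
apply: (@le_trans _ _ l%:R%:E); last by rewrite lee_fin ler_nat.
by apply: ereal_inf_lbound; exists l => //; exists a.
Qed.

Lemma G_inf_approx_of_Nfun_lt {f e n} : (Nfun mu f e < n.+1%:R%:E)%E ->
  exists2 h, G_inf n h & (Linf_dist mu f h <= e%:E)%E.
Proof.
move=> /ereal_inf_ltP [_ [g [mg g_ae_f] <-]] /ereal_inf_ltP [_ [m [c cover_g] <-]].
rewrite lte_fin ltr_nat ltnS => mn.
have [A [mA disjA coverA A_sub]] :=
  measurable_partition_of_cover mg (fun i => measurable_itv _) cover_g.
exists (fun x => \sum_(i < m) c i * \1_(A i) x); first by exists m, A, c.
apply/Linf_dist_leP; apply: filterS g_ae_f => x <-.
have : [set: T] x by []; rewrite -coverA => -[i _ Aix].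
rewrite (sum_indic_partition c disjA Aix) ler_distl.
by have /= := A_sub i x Aix; rewrite in_itv /= => /andP[-> ->].
Qed.

End Nfun_step_approximation.

Section sup_Nfun.
Context {d} {T : measurableType d} {R : realType} {mu : {measure set T -> \bar R}}.
Context {calA : set (T -> R)}.
Hypothesis mu_gt0 : (0 < mu [set: T])%E.
Hypothesis calA_measurable : forall f, calA f -> measurable_fun [set: T] f.

Local Notation supN eps := (ereal_sup [set Nfun mu f eps | f in calA]).

Lemma sup_Nfun_le_N_inf {eps} : 0 <= eps -> (supN eps <= N_inf mu calA eps)%E.
Proof.
move=> eps_ge0; apply/ereal_infP => _ [k [k_ge1 approx] <-].
apply/ereal_supP => _ [f Af <-]; have [h Gh fh] := approx f Af.
exact: (Nfun_le_G_inf mu_gt0 eps_ge0 (calA_measurable _ Af) Gh fh).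
Qed.

Lemma N_inf_le_ub_sup_Nfun {eps r} : 1 <= r -> (supN eps <= r%:E)%E ->
  (N_inf mu calA eps <= r%:E)%E.
Proof.
move=> r_ge1 sup_le_r; have r_ge0 : 0 <= r := le_trans ler01 r_ge1.
have /andP[K_le_r r_lt_K1] := truncn_itv r_ge0.
apply: (@le_trans _ _ (Num.truncn r)%:R%:E); last by rewrite lee_fin.
apply: ereal_inf_lbound; exists (Num.truncn r) => //; split => [|f Af].
  by rewrite -ltnS -(ltr_nat R) (le_lt_trans r_ge1).
apply: (G_inf_approx_of_Nfun_lt mu_gt0).
apply: (le_lt_trans _ (le_lt_trans sup_le_r _)); last by rewrite lte_fin.
by apply: ereal_sup_ubound; exists f.
Qed.

Lemma sup_Nfun_ge1 eps : calA !=set0 -> (1%:E <= supN eps)%E.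
Proof.
move=> [f Af]; apply: le_trans (Nfun_ge1 mu_gt0 f eps) _.
by apply: ereal_sup_ubound; exists f.
Qed.

End sup_Nfun.

Theorem theorem4p10 (d : measure_display) (T : measurableType d) (R : realType)
    (mu : {measure set T -> \bar R}) (calA : set (T -> R))
    (mu_nz : exists A : set T, measurable A /\ mu A <> 0%E)
    (hA : forall f, calA f -> inLinf mu f) :
  (uniformly_approximable mu calA <->
     (forall eps : R, 0 < eps ->
        (ereal_sup [set Nfun mu f eps | f in calA] < +oo)%E)) /\
  (calA !=set0 -> uniformly_approximable mu calA ->
     forall eps : R, 0 < eps ->
       N_inf mu calA eps = ereal_sup [set Nfun mu f eps | f in calA]).
Proof.
have mu_gt0 := measure_setT_gt0 mu_nz.
have calA_measurable f (Af : calA f) := (hA f Af).1.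
have sup_le_N_inf eps (eps_gt0 : 0 < eps) :=
  sup_Nfun_le_N_inf mu_gt0 calA_measurable (ltW eps_gt0).
split; first split => [approx eps eps_gt0 | sup_fin eps eps_gt0].
- exact: (le_lt_trans (sup_le_N_inf eps eps_gt0) (approx eps eps_gt0)).
- have [r r_ge1 sup_le_r] : exists2 r : R, 1 <= r &
      (ereal_sup [set Nfun mu f eps | f in calA] <= r%:E)%E.
    move: (sup_fin eps eps_gt0); case: ereal_sup => [r _ | // | _].
      by exists (Num.max 1 r); rewrite ?lee_fin le_max lexx ?orbT.
    by exists 1; rewrite ?leNye.
  exact: (le_lt_trans (N_inf_le_ub_sup_Nfun mu_gt0 r_ge1 sup_le_r) (ltry r)).
move=> calA_n0 approx eps eps_gt0; apply/eqP.
rewrite eq_le sup_le_N_inf // andbT.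
have := sup_Nfun_ge1 mu_gt0 eps calA_n0.
have := le_lt_trans (sup_le_N_inf eps eps_gt0) (approx eps eps_gt0).
case sup_eq : ereal_sup => [r| |] // _; rewrite lee_fin => r_ge1.
by apply: (N_inf_le_ub_sup_Nfun mu_gt0 r_ge1); rewrite sup_eq.
Qed.
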